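(* Let $R$ be a commutative ring and $S$ a multiplicative subset of $R$. Then $R$ is $S$-Noetherian if and only if every $S$-finite $R$-module is $u$-$S$-finitely presented.
   Context: A multiplicative subset $S$ contains $1$ and is closed under products. An $R$-module $M$ is $S$-finite if there are $s\in S$ and a finitely generated submodule $F\subseteq M$ with $sM\subseteq F$. $R$ is $S$-Noetherian if every ideal of $R$ is $S$-finite. An $R$-module $M$ is $u$-$S$-finitely presented if there are $s\in S$ and an exact sequence $0\to T_1\to F\to M\to T_2\to 0$ with $F$ finitely presented and $sT_1=sT_2=0$. *)

From HB Require Import structures.
From mathcomp Require Import all_boot all_order all_algebra.
Set Implicit Arguments. Unset Strict Implicit. Unset Printing Implicit Defensive.
Import GRing.Theory.
Local Open Scope ring_scope.

Definition multiplicative (R : comPzRingType) (S : {pred R}) : Prop :=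
  1 \in S /\ {in S &, forall a b, a * b \in S}.

Definition is_ideal (R : comPzRingType) (I : {pred R}) : Prop :=
  0 \in I /\ {in I &, forall a b, a + b \in I} /\
  (forall r : R, {in I, forall a, r * a \in I}).

Definition S_finite_ideal (R : comPzRingType) (S : {pred R}) (I : {pred R}) : Prop :=
  exists2 s, s \in S &
    exists l : seq R, all (fun x => x \in I) l /\
      forall x, x \in I ->
        exists c : 'I_(size l) -> R, s * x = \sum_(i < size l) c i * l`_i.

Definition S_Noetherian (R : comPzRingType) (S : {pred R}) : Prop :=
  forall I : {pred R}, is_ideal I -> S_finite_ideal S I.

Definition S_finite_module (R : comPzRingType) (S : {pred R}) (M : lmodType R) : Prop :=
  exists2 s, s \in S &
    exists l : seq M, forall m : M,
      exists c : 'I_(size l) -> R, s *: m = \sum_(i < size l) c i *: l`_i.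

Definition exact_at (R : comPzRingType) (U V W : lmodType R)
  (f : U -> V) (g : V -> W) : Prop :=
  forall v : V, g v = 0 <-> exists u : U, f u = v.

Definition surj (A B : Type) (f : A -> B) : Prop := forall b, exists a, f a = b.

Definition finitely_presented (R : comPzRingType) (M : lmodType R) : Prop :=
  exists (n m : nat) (a : {linear 'rV[R]_m -> 'rV[R]_n}) (p : {linear 'rV[R]_n -> M}),
    exact_at a p /\ surj p.

Definition u_S_finitely_presented (R : comPzRingType) (S : {pred R}) (M : lmodType R) : Prop :=
  exists2 s, s \in S &
    exists (T1 F T2 : lmodType R) (g : {linear T1 -> F}) (f : {linear F -> M})
           (h : {linear M -> T2}),
      finitely_presented F /\ injective g /\ exact_at g f /\ exact_at f h /\
      surj h /\ (forall t : T1, s *: t = 0) /\ (forall t : T2, s *: t = 0).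

(** If [s M] lies in the span of [l], the map [p : R^n -> M] given by [l] has
    cokernel killed by [s].  When [R] is S-Noetherian so is [R^n] (induction on
    [n] along [0 -> R^(n-1) -> R^n -> R -> 0]), so [t (ker p)] lies in the span
    [K] of finitely many elements of [ker p]; then [R^n / K] is finitely
    presented and the induced map [R^n / K -> M] has kernel killed by [t] and
    cokernel killed by [s].
    Conversely, for an ideal [I] the cyclic module [R/I] is u-S-finitely
    presented, which yields [R^m --a--> R^n --q--> R/I] with [s (ker q)] in the
    image of [a] and [s (R/I)] in the image of [q].  Lift [q] to
    [psi : R^n -> R] and pick [e] with [q e = s]; for [x] in [I] we get
    [s x e = a w], so [s^2 x = psi (a w) - s x (psi e - s)] lies in the ideal
    spanned by [psi e - s] and the [psi (a e_j)], all of which lie in [I]. *)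

From Pilot Require Import Defs.
From HB Require Import structures.
From mathcomp Require Import all_boot all_order all_algebra.
From mathcomp Require Import boolp.

(* [GRing.Theory] exports a [multiplicative] that would shadow the one of
   [Defs] in the statement of [proposition2p3]. *)
Module SNoetherianModules.

Set Implicit Arguments.
Unset Strict Implicit.
Unset Printing Implicit Defensive.

Import GRing.Theory.
Local Open Scope ring_scope.
Local Open Scope quotient_scope.

Section LinearPredicates.
Variables (R : pzRingType) (U V : lmodType R) (f : {linear U -> V}).

Definition lkernel : {pred U} := [pred u | f u == 0].
Definition lrange : {pred V} := [pred v | `[< exists u, f u = v >]].
Definition lpreim (P : {pred V}) : {pred U} := [pred u | f u \in P].

Lemma lkernelE u : (u \in lkernel) = (f u == 0). Proof. by []. Qed.

Lemma lkernel_closed : subsemimod_closed lkernel.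
Proof.
split; [split=> [|x y] | move=> a x]; rewrite !lkernelE ?linear0 ?linearD ?linearZ_LR //.
  by move=> /eqP-> /eqP->; rewrite addr0.
by move=> /eqP->; rewrite scaler0.
Qed.
HB.instance Definition _ := GRing.isSubmodClosed.Build R U lkernel lkernel_closed.

Lemma lrangeP v : reflect (exists u, f u = v) (v \in lrange).
Proof. exact: asboolP. Qed.

Lemma lrange_closed : subsemimod_closed lrange.
Proof.
split; first split.
- by apply/lrangeP; exists 0; rewrite linear0.
- by move=> _ _ /lrangeP[x <-] /lrangeP[y <-]; apply/lrangeP; exists (x + y); rewrite linearD.
by move=> a _ /lrangeP[x <-]; apply/lrangeP; exists (a *: x); rewrite linearZ_LR.
Qed.
HB.instance Definition _ := GRing.isSubmodClosed.Build R V lrange lrange_closed.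

Lemma lpreimE (P : {pred V}) u : (u \in lpreim P) = (f u \in P). Proof. by []. Qed.

Lemma lpreim_closed (P : submodClosed V) : subsemimod_closed (lpreim P).
Proof.
split; [split=> [|x y] | move=> a x]; rewrite !lpreimE ?linear0 ?linearD ?linearZ_LR.
- exact: rpred0.
- exact: rpredD.
- exact: rpredZ.
Qed.
HB.instance Definition _ (P : submodClosed V) :=
  GRing.isSubmodClosed.Build R U (lpreim P) (lpreim_closed P).

End LinearPredicates.

Section QuotientModule.
Variables (R : pzRingType) (V : lmodType R) (P : submodClosed V).

Lemma submod_zmod_closed : zmod_closed P.
Proof. by split=> [|x y Px Py]; rewrite ?rpred0 // rpredD // -scaleN1r rpredZ. Qed.

Lemma submod_rpredB : {in P &, forall x y, x - y \in P}.
Proof. exact: submod_zmod_closed.2. Qed.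

(* [submodClosed] records closure under sums and scaling only, so the
   [zmodClosed] structure expected by [Quotient.quot] is packed by hand. *)
Definition submod_zmodClosed : zmodClosed V :=
  HB.pack_for (zmodClosed V) (P : {pred V})
    (GRing.isZmodClosed.Build V (P : {pred V}) submod_zmod_closed).

Definition lquot := Quotient.quot submod_zmodClosed.
HB.instance Definition _ := GRing.Zmodule.on lquot.
HB.instance Definition _ : EqQuotient V (Quotient.equiv submod_zmodClosed) lquot :=
  EqQuotient.on lquot.
HB.instance Definition _ := ZmodQuotient.on lquot.

Lemma lquot_eqE (x y : V) : (x == y %[mod lquot]) = (x - y \in P).
Proof. by rewrite (@Quotient.idealrBE _ submod_zmodClosed). Qed.

Lemma pi_eq0 (x : V) : (\pi_lquot x == 0) = (x \in P).
Proof. by rewrite -[in RHS](subr0 x) -lquot_eqE pi_zeror. Qed.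

Definition scaleq (a : R) := lift_op1 lquot ( *:%R a).

Lemma pi_scale a : {morph \pi_lquot : x / a *: x >-> scaleq a x}.
Proof.
move=> x; unlock scaleq; apply/eqP; rewrite lquot_eqE -scalerBr rpredZ //.
by rewrite -lquot_eqE reprK.
Qed.
Canonical pi_scale_morph a := PiMorph1 (pi_scale a).

Lemma scaleqA a b (x : lquot) : scaleq a (scaleq b x) = scaleq (a * b) x.
Proof. by elim/quotW: x => x; rewrite !piE scalerA. Qed.

Lemma scaleq1 : left_id 1 scaleq.
Proof. by elim/quotW=> x; rewrite !piE scale1r. Qed.

Lemma scaleqDr : right_distributive scaleq +%R.
Proof.
by move=> a; elim/quotW=> x; elim/quotW=> y; rewrite -pi_addr !piE scalerDr pi_addr.
Qed.

Lemma scaleqDl (x : lquot) : {morph scaleq^~ x : a b / a + b}.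
Proof. by move=> a b; elim/quotW: x => x; rewrite !piE scalerDl pi_addr. Qed.

HB.instance Definition _ :=
  GRing.Zmodule_isLmodule.Build R lquot scaleqA scaleq1 scaleqDr scaleqDl.

Lemma pi_is_scalable : scalable \pi_lquot.
Proof. by move=> a x; rewrite pi_scale. Qed.
HB.instance Definition _ :=
  GRing.isScalable.Build R V lquot *:%R \pi_lquot pi_is_scalable.

Section Lift.
Variables (W : lmodType R) (f : {linear V -> W}).
Hypothesis fP : {in P, forall x, f x = 0}.

(* The otherwise unused hypothesis argument keys the linear instance below. *)
Definition lquot_lift of {in P, forall x, f x = 0} := fun q : lquot => f (repr q).

Lemma lquot_liftE x : lquot_lift fP (\pi x) = f x.
Proof.
rewrite /lquot_lift; apply/eqP; rewrite -subr_eq0 -linearB; apply/eqP/fP.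
by rewrite -lquot_eqE reprK.
Qed.

Lemma lquot_lift_is_linear : linear (lquot_lift fP).
Proof.
by move=> a; elim/quotW=> x; elim/quotW=> y; rewrite -linearP !lquot_liftE linearP.
Qed.
HB.instance Definition _ :=
  GRing.isLinear.Build R lquot W _ (lquot_lift fP) lquot_lift_is_linear.

End Lift.
End QuotientModule.

Section Submodule.
Variables (R : pzRingType) (V : lmodType R) (P : submodClosed V).

Definition submod := {x : V | x \in P}.
HB.instance Definition _ := SubType.copy submod {x : V | x \in P}.
HB.instance Definition _ := Choice.copy submod {x : V | x \in P}.
HB.instance Definition _ := [SubChoice_isSubLmodule of submod by <:].

End Submodule.

Lemma lift_seq (U V : eqType) (f : U -> V) (Q : {pred U}) (l : seq V) :
  {in l, forall y, exists2 x, x \in Q & f x = y} ->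
  exists2 l' : seq U, {subset l' <= Q} & map f l' = l.
Proof.
elim: l => [|y l IHl] fQ; first by exists [::].
have [x Qx fx] := fQ y (mem_head y l).
have [l' l'Q fl'] : exists2 l', {subset l' <= Q} & map f l' = l.
  by apply: IHl => z zl; apply: fQ; rewrite inE zl orbT.
by exists (x :: l'); [move=> z /predU1P[->|/l'Q] | rewrite /= fx fl'].
Qed.

Section LinearCombination.
Variables (R : pzRingType) (V : lmodType R).

Definition lincomb n (r : 'I_n -> V) (c : 'rV[R]_n) : V := \sum_i c 0 i *: r i.

Lemma lincomb_is_linear n (r : 'I_n -> V) : linear (lincomb r).
Proof.
move=> a c d; rewrite /lincomb scaler_sumr -big_split; apply: eq_bigr => i _.
by rewrite !mxE scalerDl scalerA.
Qed.
HB.instance Definition _ n (r : 'I_n -> V) :=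
  GRing.isLinear.Build R 'rV[R]_n V _ (lincomb r) (lincomb_is_linear r).

Lemma lincomb_delta n (r : 'I_n -> V) i : lincomb r (delta_mx 0 i) = r i.
Proof.
rewrite /lincomb (bigD1 i) //= big1 ?addr0 => [|j ji]; first by rewrite mxE !eqxx scale1r.
by rewrite mxE eqxx; case: eqP ji => [->|_]; rewrite ?eqxx /= ?scale0r.
Qed.

Lemma lincomb_closed (P : submodClosed V) n (r : 'I_n -> V) c :
  (forall i, r i \in P) -> lincomb r c \in P.
Proof. by move=> rP; apply: rpred_sum => i _; apply: rpredZ. Qed.

Definition lspan (l : seq V) : {pred V} := lrange (lincomb (fun i : 'I_(size l) => l`_i)).
HB.instance Definition _ l := GRing.SubmodClosed.on (lspan l).

Lemma lspanP l v :
  reflect (exists c : 'I_(size l) -> R, v = \sum_i c i *: l`_i) (v \in lspan l).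
Proof.
apply: (iffP (lrangeP _ _)) => [[c <-]|[c ->]]; first by exists (c 0).
by exists (\row_i c i); apply: eq_bigr => i _; rewrite mxE.
Qed.

Lemma lspan_mem l x : x \in l -> x \in lspan l.
Proof.
move=> xl; apply/lrangeP; exists (delta_mx 0 (Ordinal (etrans (index_mem x l) xl))).
by rewrite /= lincomb_delta nth_index.
Qed.

Lemma lspan_sub (P : submodClosed V) l : {subset l <= P} -> {subset lspan l <= P}.
Proof. by move=> lP _ /lrangeP[c <-]; apply: lincomb_closed => i; apply/lP/mem_nth. Qed.

Lemma lspan_subset l1 l2 : {subset l1 <= l2} -> {subset lspan l1 <= lspan l2}.
Proof. by move=> l12; apply: lspan_sub => x /l12; apply: lspan_mem. Qed.

End LinearCombination.

Section LinearImage.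
Variables (R : pzRingType) (V W : lmodType R) (f : {linear V -> W}).

Lemma lspan_map l v : v \in lspan l -> f v \in lspan (map f l).
Proof.
move=> vl; suff: v \in lpreim f (lspan (map f l)) by [].
by apply: lspan_sub vl => x xl; rewrite lpreimE lspan_mem ?map_f.
Qed.

Lemma lspan_map_inv l w : w \in lspan (map f l) -> exists2 v, v \in lspan l & f v = w.
Proof.
move=> wl; have /lrangeP[[v vl] <-] : w \in lrange (f \o val : submod (lspan l) -> W).
  apply: lspan_sub wl => _ /mapP[x xl ->]; apply/lrangeP.
  by exists (Sub x (lspan_mem xl) : submod _).
by exists v.
Qed.

Lemma linear_lincomb n (q : {linear 'rV[R]_n -> W}) c :
  q c = lincomb (fun i => q (delta_mx 0 i)) c.
Proof.
by rewrite {1}(row_sum_delta c) linear_sum; apply: eq_bigr => i _; rewrite linearZ_LR.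
Qed.

Lemma lincomb_lift n (g : {linear V -> W}) (q : {linear 'rV[R]_n -> W}) :
  (forall w, exists v, g v = w) -> exists r, forall c, g (lincomb r c) = q c.
Proof.
move=> gsurj; have [r gr] := fin_all_exists (fun i => gsurj (q (delta_mx 0 i))).
exists r => c; rewrite [RHS]linear_lincomb linear_sum.
by apply: eq_bigr => i _; rewrite linearZ_LR gr.
Qed.

End LinearImage.

Section RowSplit.
Variables (R : pzRingType) (n : nat).

Definition row_head (x : 'rV[R]_n.+1) : R^o := x 0 0.

Lemma row_head_is_linear : linear row_head.
Proof. by move=> a x y; rewrite /row_head !mxE. Qed.
HB.instance Definition _ :=
  GRing.isLinear.Build R 'rV[R]_n.+1 R^o _ row_head row_head_is_linear.

Definition row_cons0 (y : 'rV[R]_n) : 'rV[R]_n.+1 := row_mx (0 : 'rV_1) y.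

Lemma row_cons0_is_linear : linear row_cons0.
Proof.
by move=> a x y; rewrite /row_cons0 (@scale_row_mx _ 1 1 n) (@add_row_mx _ 1 1 n) scaler0 addr0.
Qed.
HB.instance Definition _ :=
  GRing.isLinear.Build R 'rV[R]_n 'rV[R]_n.+1 _ row_cons0 row_cons0_is_linear.

Lemma row_head_cons0 y : row_head (row_cons0 y) = 0.
Proof. by rewrite /row_head /row_cons0 mxE; case: splitP => j; rewrite ?mxE. Qed.

Lemma row_cons0_rsubmx x : row_head x = 0 -> row_cons0 (rsubmx (x : 'rV_(1 + n))) = x.
Proof.
move=> x0; rewrite /row_cons0 -[RHS](hsubmxK (x : 'rV_(1 + n))).
suff -> : lsubmx (x : 'rV_(1 + n)) = 0 by [].
by apply/rowP => i; rewrite ord1 !mxE -x0; congr (x 0 _); apply: val_inj.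
Qed.

End RowSplit.

Section SFinite.
Variables (R : comPzRingType) (S : {pred R}).
Hypothesis S_mult : Defs.multiplicative S.

Lemma memS1 : 1 \in S. Proof. by case: S_mult. Qed.

Lemma memSM s t : s \in S -> t \in S -> s * t \in S.
Proof. by have [_ mulS] := S_mult; apply: mulS. Qed.

Definition S_finite_submodule (V : lmodType R) (N : {pred V}) : Prop :=
  exists2 s, s \in S &
    exists2 l : seq V, {subset l <= N} & {in N, forall x, s *: x \in lspan l}.

Lemma S_finite_moduleP (M : lmodType R) :
  S_finite_module S M <->
  exists2 s, s \in S & exists l : seq M, forall m, s *: m \in lspan l.
Proof.
split=> -[s sS [l sl]]; exists s => //; exists l => m; last exact/lspanP.
by apply/lspanP; apply: sl.
Qed.

Lemma S_finite_idealE (I : {pred R}) :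
  S_finite_ideal S I <-> S_finite_submodule (I : {pred R^o}).
Proof.
split=> [[s sS [l [/allP lI sl]]] | [s sS [l lI sl]]]; exists s => //; exists l.
- by [].
- by move=> x /sl sxl; apply/lspanP.
- by split=> [|x /sl /lspanP //]; apply/allP.
Qed.

Lemma submod_is_ideal (I : submodClosed R^o) : is_ideal I.
Proof. by split; [exact: rpred0 | split; [exact: rpredD | exact: rpredZ]]. Qed.

Lemma ideal_subsemimod_closed (I : {pred R}) :
  is_ideal I -> subsemimod_closed (I : {pred R^o}).
Proof. by case=> I0 [ID IM]; split; first split. Qed.

Lemma S_NoetherianP :
  S_Noetherian S <-> forall I : submodClosed R^o, S_finite_submodule I.
Proof.
split=> [noeth I | noeth I /ideal_subsemimod_closed closedI].
  exact/S_finite_idealE/noeth/submod_is_ideal.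
apply/S_finite_idealE; apply: (noeth (HB.pack_for (submodClosed R^o) (I : {pred R^o})
  (GRing.isSubmodClosed.Build R R^o (I : {pred R^o}) closedI))).
Qed.

Lemma S_finite_submodule_image (U V : lmodType R) (f : {linear U -> V})
    (Q : {pred U}) (P : {pred V}) :
  {in Q, forall x, f x \in P} -> {in P, forall y, exists2 x, x \in Q & f x = y} ->
  S_finite_submodule Q -> S_finite_submodule P.
Proof.
move=> fQP fQ [t tS [l lQ tl]]; exists t => //; exists (map f l).
  by move=> _ /mapP[x xl ->]; apply/fQP/lQ.
by move=> _ /fQ[x Qx <-]; rewrite -linearZ_LR lspan_map ?tl.
Qed.

Lemma S_finite_submodule_ext (U V : lmodType R) (f : {linear U -> V})
    (N : submodClosed U) :
  S_finite_submodule (lrange (f \o val : submod N -> V)) ->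
  S_finite_submodule [pred x in N | f x == 0] ->
  S_finite_submodule N.
Proof.
move=> [s sS [la la_fN sla]] [t tS [lc lcK tlc]].
have [lb lbN flb] : exists2 lb, {subset lb <= N} & map f lb = la.
  by apply: lift_seq => y /la_fN /lrangeP[x <-]; exists (val x); first exact: valP.
exists (t * s); first exact: memSM.
exists (lb ++ lc) => [x | x Nx].
  by rewrite mem_cat => /orP[/lbN | /lcK /andP[]].
have fNx : f x \in lrange (f \o val : submod N -> V) by apply/lrangeP; exists (Sub x Nx).
have := sla _ fNx; rewrite -flb => /lspan_map_inv[w wlb fw].
have wN : w \in N := lspan_sub lbN wlb.
have zK : s *: x - w \in [pred x in N | f x == 0].
  by rewrite inE submod_rpredB ?rpredZ //= linearB linearZ_LR fw subrr.
rewrite -scalerA -(subrK w (s *: x)) scalerDr rpredD //.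
  by apply: (lspan_subset _ (tlc _ zK)) => y yc; rewrite mem_cat yc orbT.
by rewrite rpredZ //; apply: (lspan_subset _ wlb) => y yb; rewrite mem_cat yb.
Qed.

Lemma S_finite_rV_submodule : (forall I : submodClosed R^o, S_finite_submodule I) ->
  forall n (N : submodClosed 'rV[R]_n), S_finite_submodule N.
Proof.
move=> noeth; elim=> [|n IHn] N.
  by exists 1; [exact: memS1 | exists [::] => // x _; rewrite (thinmx0 (1 *: x)) rpred0].
apply: (S_finite_submodule_ext (f := @row_head R n)); first exact: noeth.
apply: (S_finite_submodule_image (f := @row_cons0 R n)) (IHn (lpreim (@row_cons0 R n) N)).
  by move=> y yN; rewrite inE -lpreimE yN /= row_head_cons0.
move=> x /andP[Nx /eqP x0]; exists (rsubmx (x : 'rV_(1 + n))); last exact: row_cons0_rsubmx.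
by rewrite lpreimE /= row_cons0_rsubmx.
Qed.

Lemma lquot_lspan_fp n (l : seq 'rV[R]_n) : finitely_presented (lquot (lspan l)).
Proof.
exists n, (size l), (lincomb (fun i : 'I_(size l) => l`_i)), \pi; split.
  by move=> v; rewrite (rwP eqP) pi_eq0; symmetry; apply: rwP; apply: lrangeP.
by move=> q; exists (repr q); exact: reprK.
Qed.

Lemma u_S_fp_of_map (F M : lmodType R) (f : {linear F -> M}) s t :
  s * t \in S -> finitely_presented F ->
  (forall x, f x = 0 -> s *: x = 0) -> (forall m, t *: m \in lrange f) ->
  u_S_finitely_presented S M.
Proof.
move=> stS Ffp fker fcoker; exists (s * t) => //.
exists (submod (lkernel f)), F, (lquot (lrange f)), \val, f, \pi; split=> //.
split; first exact: val_inj.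
split.
  move=> x; split=> [fx0 | [[y /= /eqP fy0] <-] //].
  by exists (Sub x (introT eqP fx0) : submod (lkernel f)).
split.
  by move=> m; rewrite (rwP eqP) pi_eq0; symmetry; apply: rwP; apply: lrangeP.
split; first by move=> q; exists (repr q); exact: reprK.
split.
  move=> y; apply: val_inj; have /eqP fy0 : val y \in lkernel f := valP y.
  by rewrite linearZ_LR linear0 mulrC -scalerA fker ?scaler0.
by elim/quotW=> m; apply/eqP; rewrite -linearZ_LR pi_eq0 -scalerA rpredZ.
Qed.

Lemma S_finite_u_S_fp (M : lmodType R) :
  (forall I : submodClosed R^o, S_finite_submodule I) ->
  S_finite_module S M -> u_S_finitely_presented S M.
Proof.
move=> noeth /S_finite_moduleP[s sS [l sl]].
pose p : {linear _ -> M} := lincomb (fun i : 'I_(size l) => l`_i).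
have [t tS [kl klK tkl]] := S_finite_rV_submodule noeth (lkernel p).
have p_kl : {in lspan kl, forall v, p v = 0} by move=> v /(lspan_sub klK) /eqP.
pose f : {linear _ -> M} := lquot_lift p_kl.
have fE v : f (\pi v) = p v := lquot_liftE p_kl v.
apply: (u_S_fp_of_map (f := f) (memSM tS sS) (lquot_lspan_fp kl)).
  by elim/quotW=> v; rewrite fE => /eqP pv0; apply/eqP; rewrite -linearZ_LR pi_eq0 tkl.
by move=> m; have /lrangeP[v <-] := sl m; apply/lrangeP; exists (\pi v).
Qed.

Lemma u_S_fp_presentation (M : lmodType R) : u_S_finitely_presented S M ->
  exists2 s, s \in S & exists n m (a : {linear 'rV[R]_m -> 'rV[R]_n})
    (q : {linear 'rV[R]_n -> M}),
    [/\ forall u, q (a u) = 0, forall v, q v = 0 -> s *: v \in lrange a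
       & forall x, s *: x \in lrange q].
Proof.
move=> [s sS [T1 [F [T2 [g [f [h [[n [m [a [p [ap psurj]]]]] [_ [gf [fh [_ [sT1 sT2]]]]]]]]]]]]].
exists s => //; exists n, m, a, (f \o p); split=> /=.
- by move=> u; rewrite (proj2 (ap (a u))) ?linear0 //; exists u.
- move=> v /gf[y py]; apply/lrangeP/ap.
  by rewrite linearZ_LR -py -linearZ_LR sT1 linear0.
- move=> x; have /fh[y fy] : h (s *: x) = 0 by rewrite linearZ_LR sT2.
  by have [v pv] := psurj y; apply/lrangeP; exists v; rewrite /= pv.
Qed.

Lemma pi_regular (I : submodClosed R^o) (y : R^o) :
  \pi_(lquot I) y = y *: \pi_(lquot I) 1.
Proof. by rewrite -linearZ_LR [y *: _]mulr1. Qed.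

Lemma lquot_S_finite (I : submodClosed R^o) : S_finite_module S (lquot I).
Proof.
apply/S_finite_moduleP; exists 1; first exact: memS1.
exists [:: \pi 1]; elim/quotW=> y.
by rewrite scale1r pi_regular rpredZ // lspan_mem ?mem_head.
Qed.

Lemma S_finite_of_cyclic_presentation (I : submodClosed R^o) s n m
    (a : {linear 'rV[R]_m -> 'rV[R]_n}) (q : {linear 'rV[R]_n -> lquot I}) :
  s \in S -> (forall u, q (a u) = 0) -> (forall v, q v = 0 -> s *: v \in lrange a) ->
  (forall x, s *: x \in lrange q) -> S_finite_submodule I.
Proof.
move=> sS qa qker qsurj.
have [r qr] := lincomb_lift q (fun w => ex_intro _ (repr w) (reprK w)).
pose psi : {linear _ -> R^o} := lincomb r.
have [e qe] : exists e, q e = s *: \pi_(lquot I) 1 by apply/lrangeP.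
pose L := (psi e - s) :: [seq psi (a (delta_mx 0 j)) | j <- enum 'I_m].
exists (s * s); first exact: memSM.
exists L => [y | x Ix].
  rewrite inE => /predU1P[-> | /mapP[j _ ->]]; rewrite -pi_eq0 ?linearB qr ?qa //.
  by rewrite qe -pi_regular subrr.
have /qker/lrangeP[w aw] : q (x *: e) = 0.
  by apply/eqP; rewrite linearZ_LR qe scalerA -pi_regular pi_eq0 mulrC rpredZ.
have psi_aw : psi (a w) = (s * x) * psi e.
  by rewrite aw scalerA linearZ_LR.
have -> : (s * s) *: x = psi (a w) - (s * x) *: (psi e - s).
  rewrite psi_aw; change (s * s * x = s * x * psi e - s * x * (psi e - s)).
  by rewrite mulrBr opprB addrC subrK mulrAC.
rewrite submod_rpredB //; last by rewrite rpredZ // lspan_mem ?mem_head.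
rewrite (linear_lincomb (psi \o a) w : psi (a w) = _); apply: lincomb_closed => j.
by apply/lspan_mem/orP; right; apply: (map_f (fun j => psi (a (delta_mx 0 j)))); rewrite mem_enum.
Qed.

End SFinite.

End SNoetherianModules.
Import SNoetherianModules.

Theorem proposition2p3 (R : comPzRingType) (S : {pred R}) :
  multiplicative S ->
  (S_Noetherian S <->
   forall M : lmodType R, S_finite_module S M -> u_S_finitely_presented S M).
Proof.
move=> hS; rewrite (S_NoetherianP S); split=> [noeth M | fp I].
  exact: S_finite_u_S_fp.
have [s sS [n [m [a [q [qa qker qsurj]]]]]] :=
  u_S_fp_presentation (fp _ (lquot_S_finite hS I)).
exact: S_finite_of_cyclic_presentation sS qa qker qsurj.
Qed.
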